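(* For each $\eta\in(0,\pi/3)$, $f_1(\mathrm{co}(V))\cup f_2(\mathrm{co}(V))\subset\mathrm{co}(V)$, where $V=\{b_0\}\cup\{z_k:k\ge0\}\cup\{w_k:k\ge1\}$.
   Context: For $\eta\in(0,\pi/3)$ let $a=\frac{e^{-i\eta}}{2\cos\eta}$, $f_1(z)=az$, $f_2(z)=1-\bar az$, $c=\frac{1}{1-|a|^4}$, and for integers $k\ge0$ put $z_k=ca^{k+1}$, $w_k=1-c|a|^2a^k$, $b_k=a+c|a|^4a^k$. $\mathrm{co}$ denotes convex hull. *)

From Stdlib Require Import Reals List.
From Coquelicot Require Import Coquelicot.
Open Scope R_scope.

Fixpoint Cpow (z : C) (n : nat) : C :=
  match n with O => RtoC 1 | S k => Cmult z (Cpow z k) end.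

Definition Cexpi (t : R) : C := (cos t, sin t).

Definition a_of (eta : R) : C := Cdiv (Cexpi (- eta)) (RtoC (2 * cos eta)).
Definition f1 (eta : R) (z : C) : C := Cmult (a_of eta) z.
Definition f2 (eta : R) (z : C) : C :=
  Cminus (RtoC 1) (Cmult (Cconj (a_of eta)) z).
Definition c_of (eta : R) : R := 1 / (1 - (Cmod (a_of eta)) ^ 4).
Definition z_k (eta : R) (k : nat) : C :=
  Cmult (RtoC (c_of eta)) (Cpow (a_of eta) (S k)).
Definition w_k (eta : R) (k : nat) : C :=
  Cminus (RtoC 1)
    (Cmult (RtoC (c_of eta * (Cmod (a_of eta)) ^ 2)) (Cpow (a_of eta) k)).
Definition b_k (eta : R) (k : nat) : C :=
  Cplus (a_of eta)
    (Cmult (RtoC (c_of eta * (Cmod (a_of eta)) ^ 4)) (Cpow (a_of eta) k)).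

Definition Vset (eta : R) (v : C) : Prop :=
  v = b_k eta 0 \/ (exists k : nat, v = z_k eta k)
  \/ (exists k : nat, (1 <= k)%nat /\ v = w_k eta k).

Definition co (S : C -> Prop) (z : C) : Prop :=
  exists l : list (R * C),
    List.Forall (fun p => 0 <= fst p /\ S (snd p)) l /\
    List.fold_right Rplus 0 (List.map fst l) = 1 /\
    z = List.fold_right Cplus (RtoC 0) (List.map (fun p => Cmult (RtoC (fst p)) (snd p)) l).

From Pilot Require Import Defs.
From Stdlib Require Import Reals Lra Lia List.
From Coquelicot Require Import Coquelicot.
Open Scope R_scope.

(* Here Re a = 1/2 and r = |a|^2 < 1, so conj a = 1 - a, a conj a = r and a^2 = a - r.  Every
   point is then x + y a with real coordinates (x, y), on which f1 and f2 act affinely, and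
   a^(n+1) = - r U_n + U_(n+1) a for the Lucas sequence U_(n+2) = U_(n+1) - r U_n.  Since
   f1 and f2 are affine, it suffices to send each vertex into co(V).  Most images are
   vertices or explicit convex combinations of a few of them.  The hard case is
   f1(w_k) = a - r z_k for k >= 4: when r >= 1/2 it is a convex combination of z_(k-3),
   z_(k-4), z_0, z_1 and the real point 1/(1+r); when r <= 1/2 it lies in the triangle
   z_0 z_1 (1/(1+r)) because U_k is small, which follows from the invariant
   U_(n+1)^2 - U_(n+1) U_n + r U_n^2 = r^n when r is away from 1/4, and from the bound
   |U_(n+1)| <= (n+1) rho^n (rho^2 >= r) near r = 1/4, where that quadratic form degenerates. *)

Definition weight (l : list (R * C)) : R := fold_right Rplus 0 (map fst l).
Definition barycenter (l : list (R * C)) : C :=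
  fold_right Cplus (RtoC 0) (map (fun p => Cmult (RtoC (fst p)) (snd p)) l).
Definition rescale (t : R) (l : list (R * C)) : list (R * C) :=
  map (fun p => (t * fst p, snd p)) l.

Lemma weight_app l1 l2 : weight (l1 ++ l2) = weight l1 + weight l2.
Proof. induction l1 as [|p l IH]; unfold weight in *; simpl; [ring|rewrite IH; ring]. Qed.

Lemma barycenter_app l1 l2 :
  barycenter (l1 ++ l2) = (barycenter l1 + barycenter l2)%C.
Proof. induction l1 as [|p l IH]; unfold barycenter in *; simpl; [ring|rewrite IH; ring]. Qed.

Lemma weight_rescale t l : weight (rescale t l) = t * weight l.
Proof. induction l as [|p l IH]; unfold weight in *; simpl; [ring|rewrite IH; ring]. Qed.

Lemma barycenter_rescale t l : barycenter (rescale t l) = (t * barycenter l)%C.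
Proof.
  induction l as [|p l IH]; unfold barycenter in *; simpl; [ring|].
  rewrite IH, RtoC_mult. ring.
Qed.

Section ConvexHull.
Variable S : C -> Prop.

Lemma co_in v : S v -> co S v.
Proof.
  intros Hv. exists ((1, v) :: nil). repeat split.
  - repeat constructor; simpl; [lra|exact Hv].
  - simpl; ring.
  - simpl; ring.
Qed.

Lemma co_flatten (L : list (R * C)) :
  List.Forall (fun p => 0 <= fst p /\ co S (snd p)) L ->
  exists l, List.Forall (fun p => 0 <= fst p /\ S (snd p)) l /\
            weight l = weight L /\ barycenter l = barycenter L.
Proof.
  induction 1 as [|[t u] L [Ht Hu] _ [l (Fl & Wl & El)]].
  - exists nil. repeat split; constructor.
  - destruct Hu as (lu & Flu & Wlu & Elu). simpl in Ht, Elu.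
    fold (weight lu) in Wlu. fold (barycenter lu) in Elu.
    exists (rescale t lu ++ l). repeat split.
    + apply List.Forall_app; split; [|exact Fl].
      apply List.Forall_map. eapply List.Forall_impl; [|exact Flu].
      intros [s v] [Hs Hv]; simpl in *; split; [nra|exact Hv].
    + rewrite weight_app, weight_rescale, Wl, Wlu. unfold weight; simpl. ring.
    + rewrite barycenter_app, barycenter_rescale, El, <- Elu. unfold barycenter; simpl. ring.
Qed.

Lemma co_barycenter (L : list (R * C)) :
  List.Forall (fun p => 0 <= fst p /\ co S (snd p)) L -> weight L = 1 -> co S (barycenter L).
Proof.
  intros HL W. destruct (co_flatten L HL) as (l & Fl & Wl & El).
  exists l. repeat split; [exact Fl|fold (weight l); lra|fold (barycenter l); auto].
Qed.

End ConvexHull.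

Definition affine_image (alpha beta : C) (l : list (R * C)) : list (R * C) :=
  map (fun p => (fst p, alpha + beta * snd p)%C) l.

Lemma barycenter_affine_image alpha beta l :
  barycenter (affine_image alpha beta l) = (weight l * alpha + beta * barycenter l)%C.
Proof.
  induction l as [|p l IH]; unfold barycenter, weight, affine_image in *; simpl; [ring|].
  rewrite IH, RtoC_plus. ring.
Qed.

Lemma co_affine_image (S T : C -> Prop) (alpha beta : C) :
  (forall v, S v -> co T (alpha + beta * v)%C) ->
  forall z, co S z -> co T (alpha + beta * z)%C.
Proof.
  intros Hv z (l & Fl & Wl & ->). fold (weight l) in Wl. fold (barycenter l).
  replace (alpha + beta * barycenter l)%C with (barycenter (affine_image alpha beta l))
    by (rewrite barycenter_affine_image, Wl; ring).
  apply co_barycenter.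
  - apply List.Forall_map. eapply List.Forall_impl; [|exact Fl].
    intros [t v] [Ht HSv]; simpl; auto.
  - unfold weight, affine_image. rewrite map_map. exact Wl.
Qed.

Definition pt (a : C) (x y : R) : C := (x + y * a)%C.

Lemma co_pt_convex5 {S : C -> Prop} {a : C} (l1 l2 l3 l4 l5 : R)
  {x1 y1 x2 y2 x3 y3 x4 y4 x5 y5 x y : R} :
  co S (pt a x1 y1) -> co S (pt a x2 y2) -> co S (pt a x3 y3) ->
  co S (pt a x4 y4) -> co S (pt a x5 y5) ->
  0 <= l1 -> 0 <= l2 -> 0 <= l3 -> 0 <= l4 -> 0 <= l5 -> l1 + l2 + l3 + l4 + l5 = 1 ->
  x = l1 * x1 + l2 * x2 + l3 * x3 + l4 * x4 + l5 * x5 ->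
  y = l1 * y1 + l2 * y2 + l3 * y3 + l4 * y4 + l5 * y5 ->
  co S (pt a x y).
Proof.
  intros H1 H2 H3 H4 H5 P1 P2 P3 P4 P5 W -> ->.
  replace (pt a _ _) with (barycenter ((l1, pt a x1 y1) :: (l2, pt a x2 y2) ::
    (l3, pt a x3 y3) :: (l4, pt a x4 y4) :: (l5, pt a x5 y5) :: nil)).
  - apply co_barycenter; [|unfold weight; simpl; lra].
    repeat (apply List.Forall_cons; [split; assumption|]). apply List.Forall_nil.
  - unfold barycenter, pt; simpl. rewrite !RtoC_plus, !RtoC_mult. ring.
Qed.

Lemma co_pt_convex3 {S : C -> Prop} {a : C} (l1 l2 l3 : R) {x1 y1 x2 y2 x3 y3 x y : R} :
  co S (pt a x1 y1) -> co S (pt a x2 y2) -> co S (pt a x3 y3) ->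
  0 <= l1 -> 0 <= l2 -> 0 <= l3 -> l1 + l2 + l3 = 1 ->
  x = l1 * x1 + l2 * x2 + l3 * x3 -> y = l1 * y1 + l2 * y2 + l3 * y3 ->
  co S (pt a x y).
Proof.
  intros H1 H2 H3 P1 P2 P3 W -> ->.
  apply (co_pt_convex5 l1 l2 l3 0 0 H1 H2 H3 H1 H1); lra.
Qed.

Lemma scale_pt a (t x y : R) : (t * pt a x y)%C = pt a (t * x) (t * y).
Proof. unfold pt. rewrite !RtoC_mult. ring. Qed.

Lemma one_sub_pt a (x y : R) : (1 - pt a x y)%C = pt a (1 - x) (- y).
Proof. unfold pt. rewrite RtoC_minus, RtoC_opp. ring. Qed.

Fixpoint lucas (r : R) (n : nat) : R :=
  match n with
  | O => 0
  | S m => match m with O => 1 | S p => lucas r m - r * lucas r p end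
  end.

Lemma lucas_SS r n : lucas r (S (S n)) = lucas r (S n) - r * lucas r n.
Proof. reflexivity. Qed.

Lemma lucas_invariant r n :
  lucas r (S n) ^ 2 - lucas r (S n) * lucas r n + r * lucas r n ^ 2 = r ^ n.
Proof.
  induction n as [|n IH]; [simpl; ring|].
  rewrite lucas_SS. change (r ^ S n) with (r * r ^ n). rewrite <- IH. ring.
Qed.

Lemma lucas_linear_bound r rho n :
  1/4 <= r <= rho ^ 2 -> 1/2 <= rho -> Rabs (lucas r (S n)) <= INR (S n) * rho ^ n.
Proof.
  intros Hr Hrho. induction n as [|n IH].
  - simpl. rewrite Rabs_R1. lra.
  - set (X := lucas r (S n)) in *. set (Y := lucas r (S (S n))).
    assert (Hpow : r ^ S n <= (rho ^ S n) ^ 2).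
    { rewrite <- pow_mult, Nat.mul_comm, pow_mult. apply pow_incr. lra. }
    (* By the invariant, (2 Y - X)^2 = 4 r^(n+1) - (4 r - 1) X^2. *)
    assert (Hgap : Rabs (2 * Y - X) <= 2 * rho ^ S n).
    { assert (Hinv := lucas_invariant r (S n)). fold X Y in Hinv.
      assert (0 <= rho ^ S n) by (apply pow_le; lra).
      rewrite <- (Rabs_right (2 * rho ^ S n)) by lra.
      apply Rsqr_le_abs_0. unfold Rsqr.
      assert (0 <= (4 * r - 1) * X ^ 2) by (apply Rmult_le_pos; [lra|apply pow2_ge_0]).
      rewrite <- Rsqr_pow2 in Hpow. unfold Rsqr in Hpow. nra. }
    replace Y with (X / 2 + (2 * Y - X) / 2) by field.
    eapply Rle_trans; [apply Rabs_triang|].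
    unfold Rdiv. rewrite !Rabs_mult, (Rabs_right (/ 2)) by lra.
    rewrite !S_INR in *. rewrite <- tech_pow_Rmult.
    assert (0 <= rho ^ n) by (apply pow_le; lra).
    assert (0 <= (INR n + 1) * rho ^ n * (rho - 1/2)).
    { apply Rmult_le_pos; [apply Rmult_le_pos|]; pose proof (pos_INR n); lra. }
    rewrite <- tech_pow_Rmult in Hgap. lra.
Qed.

Lemma nat_mul_pow_decreasing rho m n : 0 <= rho <= 2/3 -> (1 <= m <= n)%nat ->
  INR (S n) * rho ^ n <= INR (S m) * rho ^ m.
Proof.
  intros Hrho [Hm Hmn]. induction Hmn as [|n Hmn IH]; [lra|].
  eapply Rle_trans; [|exact IH].
  assert (1 <= INR n) by (apply (le_INR 1); lia).
  assert (0 <= rho ^ n * (INR n + 1 - (INR n + 2) * rho)).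
  { apply Rmult_le_pos; [apply pow_le|]; nra. }
  rewrite <- tech_pow_Rmult, !S_INR. lra.
Qed.

Lemma lucas_bounds_near_quarter r n : 1/4 <= r <= 13/50 -> (5 <= n)%nat ->
  Rabs (lucas r (S n)) <= 1/4 /\ Rabs (lucas r (S (S n))) <= 1/8.
Proof.
  intros Hr Hn. set (rho := 51/100).
  assert (Hrho : 1/4 <= r <= rho ^ 2) by (unfold rho; lra).
  split.
  - eapply Rle_trans; [apply (lucas_linear_bound r rho n Hrho); unfold rho; lra|].
    eapply Rle_trans; [apply (nat_mul_pow_decreasing rho 5 n); unfold rho; lra || lia|].
    unfold rho; simpl; lra.
  - eapply Rle_trans; [apply (lucas_linear_bound r rho (S n) Hrho); unfold rho; lra|].
    eapply Rle_trans; [apply (nat_mul_pow_decreasing rho 6 (S n)); unfold rho; lra || lia|].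
    unfold rho; simpl; lra.
Qed.

Lemma pow_decreasing x m n : 0 <= x <= 1 -> (m <= n)%nat -> x ^ n <= x ^ m.
Proof.
  intros Hx Hmn. induction Hmn as [|n Hmn IH]; [lra|].
  assert (0 <= x ^ n) by (apply pow_le; lra).
  simpl. nra.
Qed.

Lemma quadratic_form_dual_bound r X Y alpha beta :
  (r - 1/4) * (beta * Y + alpha * X) ^ 2
  <= (r * beta ^ 2 + alpha * beta + alpha ^ 2) * (Y ^ 2 - Y * X + r * X ^ 2).
Proof.
  assert (0 <= (beta * (r * X - Y / 2) - alpha * (Y - X / 2)) ^ 2) by apply pow2_ge_0.
  nra.
Qed.

Lemma pow5_le_quarter_gap r : 13/50 <= r <= 1/2 -> r ^ 5 <= (r - 1/4) * (1 - r) ^ 2.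
Proof.
  intros Hr.
  assert (Hinterval : forall lo hi, 1/4 <= lo <= r -> r <= hi <= 1 ->
            hi ^ 5 <= (lo - 1/4) * (1 - hi) ^ 2 -> r ^ 5 <= (r - 1/4) * (1 - r) ^ 2).
  { intros lo hi Hlo Hhi Hnum.
    assert (r ^ 5 <= hi ^ 5) by (apply pow_incr; lra).
    assert ((1 - hi) ^ 2 <= (1 - r) ^ 2) by (apply pow_incr; lra).
    assert (0 <= (1 - hi) ^ 2) by apply pow2_ge_0.
    nra. }
  destruct (Rle_lt_dec r (3/10)); [apply (Hinterval (13/50) (3/10)); simpl; lra|].
  destruct (Rle_lt_dec r (4/10)); [apply (Hinterval (3/10) (4/10)); simpl; lra|].
  apply (Hinterval (4/10) (1/2)); simpl; lra.
Qed.

(* The barycentric weights of the point with coordinates (c r^2 X, 1 - c r Y), c = 1/(1-r^2),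
   with respect to z_0, z_1 and 1/(1+r) are 1 - r - Y + r X, (r + Y)(1 - r) - r X and
   r (r + Y); see [co_triangle]. *)
Definition triangle_cond (r X Y : R) : Prop :=
  - r <= Y /\ r * X - (1 - r) * Y <= r * (1 - r) /\ Y - r * X <= 1 - r.

Lemma triangle_cond_of_small_bounds r X Y : 1/4 <= r <= 13/50 ->
  Rabs X <= 1/4 -> Rabs Y <= 1/8 -> triangle_cond r X Y.
Proof.
  intros Hr HX HY. apply Rabs_le_between in HX, HY.
  unfold triangle_cond. repeat split; nra.
Qed.

Lemma lucas_form_bound r n alpha beta B : 1/4 < r -> 0 <= B ->
  (r * beta ^ 2 + alpha * beta + alpha ^ 2) * r ^ n <= (r - 1/4) * B ^ 2 ->
  Rabs (beta * lucas r (S n) + alpha * lucas r n) <= B.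
Proof.
  intros Hr HB Hle. rewrite <- (Rabs_right B) by lra.
  apply Rsqr_le_abs_0. rewrite !Rsqr_pow2.
  assert (Hdual := quadratic_form_dual_bound r (lucas r n) (lucas r (S n)) alpha beta).
  rewrite lucas_invariant in Hdual.
  apply Rmult_le_reg_l with (r - 1/4); lra.
Qed.

Lemma lucas_triangle_cond_large r n : 13/50 <= r <= 1/2 -> (6 <= n)%nat ->
  triangle_cond r (lucas r n) (lucas r (S n)).
Proof.
  intros Hr Hn.
  set (G := (r - 1/4) * (1 - r) ^ 2).
  assert (HG : 0 <= G <= r - 1/4).
  { unfold G. assert (0 <= (1 - r) ^ 2 <= 1) by (simpl; nra). nra. }
  assert (Hrn : 0 <= r ^ n <= r * G).
  { split; [apply pow_le; lra|].
    apply Rle_trans with (r ^ 6); [apply pow_decreasing; lra || lia|].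
    change (r ^ 6) with (r * r ^ 5). apply Rmult_le_compat_l; [lra|].
    apply pow5_le_quarter_gap; lra. }
  assert (Hbound : forall alpha beta B, 0 <= B ->
            (r * beta ^ 2 + alpha * beta + alpha ^ 2) * r ^ n <= (r - 1/4) * B ^ 2 ->
            - B <= beta * lucas r (S n) + alpha * lucas r n <= B).
  { intros alpha beta B HB Hle. apply Rabs_le_between, lucas_form_bound; lra. }
  assert (0 <= r * r ^ n <= r * r * G) by nra.
  unfold triangle_cond. split; [|split].
  - destruct (Hbound 0 1 r) as [Hlo _]; [lra| |lra].
    replace (r * 1 ^ 2 + 0 * 1 + 0 ^ 2) with r by ring. simpl. nra.
  - destruct (Hbound r (- (1 - r)) (r * (1 - r))) as [_ Hhi]; [nra| |lra].
    replace (r * (- (1 - r)) ^ 2 + r * - (1 - r) + r ^ 2) with (r * r * r) by ring.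
    unfold G in *. simpl. nra.
  - destruct (Hbound (- r) 1 (1 - r)) as [_ Hhi]; [lra| |lra].
    replace (r * 1 ^ 2 + - r * 1 + (- r) ^ 2) with (r * r) by ring.
    unfold G in *. simpl. nra.
Qed.

Lemma lucas_triangle_cond r n : 1/4 <= r <= 1/2 -> (4 <= n)%nat ->
  triangle_cond r (lucas r n) (lucas r (S n)).
Proof.
  intros Hr Hn.
  destruct (Nat.le_gt_cases 6 n) as [H6|Hlt].
  - destruct (Rle_lt_dec (13/50) r) as [Hbig|Hsmall].
    + apply lucas_triangle_cond_large; lra || lia.
    + destruct n as [|m]; [lia|].
      destruct (lucas_bounds_near_quarter r m ltac:(lra) ltac:(lia)).
      apply triangle_cond_of_small_bounds; lra.
  - assert (n = 4 \/ n = 5)%nat as [-> | ->] by lia;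
      unfold triangle_cond; simpl; repeat split; nra.
Qed.

(* The constant c and the points z_k, w_k, b_k and the set V of [Defs], with [a_of eta]
   replaced by an arbitrary a: [Vset eta] is convertible to [vertices (a_of eta)]. *)
Definition vertex_scale (a : C) : R := 1 / (1 - Cmod a ^ 4).
Definition zvert (a : C) (k : nat) : C :=
  Cmult (RtoC (vertex_scale a)) (Defs.Cpow a (S k)).
Definition wvert (a : C) (k : nat) : C :=
  Cminus (RtoC 1) (Cmult (RtoC (vertex_scale a * Cmod a ^ 2)) (Defs.Cpow a k)).
Definition bvert (a : C) (k : nat) : C :=
  Cplus a (Cmult (RtoC (vertex_scale a * Cmod a ^ 4)) (Defs.Cpow a k)).
Definition vertices (a : C) (v : C) : Prop :=
  v = bvert a 0 \/ (exists k, v = zvert a k) \/ (exists k, (1 <= k)%nat /\ v = wvert a k).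

Section Vertices.
Variables (a : C) (r : R).
Hypotheses (Re_a : Re a = 1/2) (Cmod_a : Cmod a ^ 2 = r) (r_lt_1 : r < 1).

Lemma quarter_le_r : 1/4 <= r.
Proof.
  rewrite <- Cmod_a, Cmod2_alt, Re_a. assert (0 <= Im a ^ 2) by apply pow2_ge_0. lra.
Qed.

Lemma conj_a : Cconj a = (1 - a)%C.
Proof. apply injective_projections; simpl; [unfold Re in Re_a; lra|ring]. Qed.

Lemma sqr_a : (a * a)%C = (a - r)%C.
Proof.
  rewrite <- Cmod_a, Cmod2_conj, conj_a. ring.
Qed.

Lemma f1_pt (x y : R) : (a * pt a x y)%C = pt a (- r * y) (x + y).
Proof.
  unfold pt. rewrite RtoC_mult, RtoC_opp, RtoC_plus.
  transitivity (x * a + y * (a * a))%C; [ring|]. rewrite sqr_a. ring.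
Qed.

Lemma f2_pt (x y : R) : (1 - Cconj a * pt a x y)%C = pt a (1 - x - r * y) x.
Proof.
  unfold pt. rewrite conj_a, !RtoC_minus, RtoC_mult.
  transitivity (1 - x + x * a - y * a + y * (a * a))%C; [ring|]. rewrite sqr_a. ring.
Qed.

Lemma Cpow_a_pt n : Defs.Cpow a (S n) = pt a (- r * lucas r n) (lucas r (S n)).
Proof.
  induction n as [|n IH].
  - unfold pt; simpl. rewrite Rmult_0_r. ring.
  - change (Defs.Cpow a (S (S n))) with (a * Defs.Cpow a (S n))%C.
    rewrite IH, f1_pt, lucas_SS. f_equal. ring.
Qed.

Lemma Cmod_a_pow4 : Cmod a ^ 4 = r ^ 2.
Proof. rewrite <- Cmod_a. ring. Qed.

Lemma vertex_scale_a : vertex_scale a = 1 / (1 - r ^ 2).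
Proof. unfold vertex_scale. rewrite Cmod_a_pow4. reflexivity. Qed.

Local Ltac solve_coord :=
  repeat rewrite lucas_SS; simpl lucas; field;
  pose proof quarter_le_r; repeat split; nra.

Lemma zvert_pt k :
  zvert a k = pt a (- r * lucas r k / (1 - r ^ 2)) (lucas r (S k) / (1 - r ^ 2)).
Proof.
  unfold zvert. rewrite vertex_scale_a, Cpow_a_pt, scale_pt. f_equal; solve_coord.
Qed.

Lemma wvert_pt j : wvert a (S j) =
  pt a (1 + r ^ 2 * lucas r j / (1 - r ^ 2)) (- r * lucas r (S j) / (1 - r ^ 2)).
Proof.
  unfold wvert. rewrite vertex_scale_a, Cmod_a, Cpow_a_pt, scale_pt, one_sub_pt.
  f_equal; solve_coord.
Qed.

Lemma bvert0_pt : bvert a 0 = pt a (r ^ 2 / (1 - r ^ 2)) 1.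
Proof.
  unfold bvert, pt. rewrite vertex_scale_a, Cmod_a_pow4.
  replace (1 / (1 - r ^ 2) * r ^ 2) with (r ^ 2 / (1 - r ^ 2)) by solve_coord.
  simpl. ring.
Qed.

Lemma bvert_S_pt i : bvert a (S i) =
  pt a (- r ^ 3 * lucas r i / (1 - r ^ 2)) (1 + r ^ 2 * lucas r (S i) / (1 - r ^ 2)).
Proof.
  unfold bvert. rewrite vertex_scale_a, Cmod_a_pow4, Cpow_a_pt, scale_pt.
  unfold pt. rewrite !RtoC_plus.
  replace (1 / (1 - r ^ 2) * r ^ 2 * (- r * lucas r i))
    with (- r ^ 3 * lucas r i / (1 - r ^ 2)) by solve_coord.
  replace (1 / (1 - r ^ 2) * r ^ 2 * lucas r (S i))
    with (r ^ 2 * lucas r (S i) / (1 - r ^ 2)) by solve_coord.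
  ring.
Qed.

Local Notation V := (vertices a).

Lemma co_zvert k :
  co V (pt a (- r * lucas r k / (1 - r ^ 2)) (lucas r (S k) / (1 - r ^ 2))).
Proof. rewrite <- zvert_pt. apply co_in. right; left; eauto. Qed.

Lemma co_wvert j :
  co V (pt a (1 + r ^ 2 * lucas r j / (1 - r ^ 2)) (- r * lucas r (S j) / (1 - r ^ 2))).
Proof. rewrite <- wvert_pt. apply co_in. right; right. exists (S j). split; [lia|reflexivity]. Qed.

Lemma co_bvert0 : co V (pt a (r ^ 2 / (1 - r ^ 2)) 1).
Proof. rewrite <- bvert0_pt. apply co_in. left; reflexivity. Qed.

Local Ltac solve_weight := pose proof quarter_le_r;
  repeat (apply Rdiv_le_0_compat || apply Rmult_le_pos); nra.

Local Ltac solve_combination := first [solve_weight | solve_coord].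

Lemma co_real_point : co V (pt a (1 / (1 + r)) 0).
Proof.
  apply (co_pt_convex3 (1 / (1 + r)) (r / (1 + r)) 0 (co_wvert 0) (co_zvert 0) (co_zvert 0));
    solve_combination.
Qed.

Lemma co_bvert j : co V (bvert a j).
Proof.
  destruct j as [|i]; [apply co_in; left; reflexivity|].
  rewrite bvert_S_pt.
  apply (co_pt_convex3 (1 - r ^ 2) (r ^ 2) 0 (co_zvert 0) (co_zvert i) (co_zvert 0));
    solve_combination.
Qed.

Lemma co_f1_bvert0 : co V (a * bvert a 0)%C.
Proof.
  rewrite bvert0_pt, f1_pt.
  apply (co_pt_convex3 (1 - r ^ 2) (r ^ 2) 0 (co_zvert 1) (co_zvert 0) (co_zvert 0));
    solve_combination.
Qed.

Lemma co_f2_bvert0 : co V (1 - Cconj a * bvert a 0)%C.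
Proof.
  rewrite bvert0_pt, f2_pt.
  apply (co_pt_convex3 (1 - r) r 0 (co_wvert 0) (co_zvert 1) (co_zvert 0));
    solve_combination.
Qed.

Lemma f1_zvert k : (a * zvert a k)%C = zvert a (S k).
Proof. unfold zvert. change (Defs.Cpow a (S (S k))) with (a * Defs.Cpow a (S k))%C. ring. Qed.

Lemma f2_zvert_S j : (1 - Cconj a * zvert a (S j))%C = wvert a (S j).
Proof.
  unfold zvert, wvert. change (Defs.Cpow a (S (S j))) with (a * Defs.Cpow a (S j))%C.
  rewrite RtoC_mult, Cmod2_conj. ring.
Qed.

Lemma co_f2_zvert0 : co V (1 - Cconj a * zvert a 0)%C.
Proof.
  rewrite zvert_pt, f2_pt.
  apply (co_pt_convex3 (r / (2 - r)) ((1 - r) / (2 - r)) ((1 - r) / (2 - r))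
           (co_zvert 2) (co_wvert 0) co_real_point);
    solve_combination.
Qed.

Lemma f2_wvert j : (1 - Cconj a * wvert a (S j))%C = bvert a j.
Proof.
  unfold wvert, bvert. change (Defs.Cpow a (S j)) with (a * Defs.Cpow a j)%C.
  replace (Cmod a ^ 4) with (Cmod a ^ 2 * Cmod a ^ 2) by ring.
  rewrite !RtoC_mult, !Cmod2_conj, conj_a. ring.
Qed.

Lemma f1_wvert_pt j : (a * wvert a (S j))%C =
  pt a (r ^ 2 * lucas r (S j) / (1 - r ^ 2)) (1 - r * lucas r (S (S j)) / (1 - r ^ 2)).
Proof. rewrite wvert_pt, f1_pt. f_equal; solve_coord. Qed.

Lemma co_triangle X Y : triangle_cond r X Y ->
  co V (pt a (r ^ 2 * X / (1 - r ^ 2)) (1 - r * Y / (1 - r ^ 2))).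
Proof.
  intros (H1 & H2 & H3). pose proof quarter_le_r.
  apply (co_pt_convex3 (1 - r - Y + r * X) ((r + Y) * (1 - r) - r * X) (r ^ 2 + r * Y)
           (co_zvert 0) (co_zvert 1) co_real_point); first [nra | solve_coord].
Qed.

Lemma co_f1_wvert_large j : 1/2 <= r -> (3 <= j)%nat -> co V (a * wvert a (S j))%C.
Proof.
  intros Hr Hj. rewrite f1_wvert_pt.
  destruct j as [|[|[|m]]]; try lia.
  (* With k = j + 1, a^4 = (1 - 2r) a - r (1 - r) gives
     - r z_k = r (2r - 1) z_(k-3) + r^2 (1 - r) z_(k-4), a combination with weights >= 0. *)
  apply (co_pt_convex5 (r * (2 * r - 1)) (r ^ 2 * (1 - r)) (r * (1 - r) * (3 - r))
           ((1 - r) ^ 3) (r * (1 - r) ^ 2)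
           (co_zvert (S m)) (co_zvert m) (co_zvert 0) (co_zvert 1) co_real_point);
    solve_combination.
Qed.

Lemma co_f1_wvert j : co V (a * wvert a (S j))%C.
Proof.
  destruct j as [|[|[|m]]]; [rewrite f1_wvert_pt..|].
  - apply (co_pt_convex3 r (1 - r) 0 (co_wvert 1) (co_zvert 1) (co_zvert 0));
      solve_combination.
  - apply (co_pt_convex3 r (r - r ^ 2) ((1 - r) ^ 2) co_bvert0 (co_wvert 1) (co_zvert 1));
      solve_combination.
  - apply (co_pt_convex3 (r / (1 + 2 * r)) (r * (2 + r - r ^ 2) / (1 + 2 * r))
             ((1 - r) ^ 2 * (1 + r) / (1 + 2 * r)) (co_wvert 3) (co_zvert 0) (co_zvert 1));
      solve_combination.
  - pose proof quarter_le_r.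
    destruct (Rle_lt_dec r (1/2)).
    + rewrite f1_wvert_pt. apply co_triangle, lucas_triangle_cond; lra || lia.
    + apply co_f1_wvert_large; lra || lia.
Qed.

Lemma co_vertex_images v : V v -> co V (a * v)%C /\ co V (1 - Cconj a * v)%C.
Proof.
  intros [-> | [[k ->] | [k [Hk ->]]]].
  - split; [apply co_f1_bvert0|apply co_f2_bvert0].
  - split; [rewrite f1_zvert; apply co_in; right; left; eauto|].
    destruct k as [|j]; [apply co_f2_zvert0|].
    rewrite f2_zvert_S. apply co_in. right; right. exists (S j); split; [lia|reflexivity].
  - destruct k as [|j]; [lia|].
    split; [apply co_f1_wvert|rewrite f2_wvert; apply co_bvert].
Qed.

Theorem co_vertices_invariant z : co V z -> co V (a * z)%C /\ co V (1 - Cconj a * z)%C.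
Proof.
  intros Hz. split.
  - replace (a * z)%C with (0 + a * z)%C by ring.
    apply (co_affine_image V V); [|exact Hz].
    intros v Hv. rewrite Cplus_0_l. apply co_vertex_images, Hv.
  - replace (1 - Cconj a * z)%C with (1 + (- Cconj a) * z)%C by ring.
    apply (co_affine_image V V); [|exact Hz].
    intros v Hv. replace (1 + - Cconj a * v)%C with (1 - Cconj a * v)%C by ring.
    apply co_vertex_images, Hv.
Qed.
End Vertices.

Lemma a_of_components eta : cos eta <> 0 ->
  a_of eta = (1/2, - sin eta / (2 * cos eta)).
Proof.
  intros Hcos. unfold a_of, Cexpi, Cdiv, Cinv, Cmult, RtoC. rewrite cos_neg, sin_neg.
  apply injective_projections; simpl; field; auto.
Qed.

Lemma Cmod_a_of_sqr eta : cos eta <> 0 -> Cmod (a_of eta) ^ 2 = / (4 * cos eta ^ 2).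
Proof.
  intros Hcos. rewrite Cmod2_alt, a_of_components by exact Hcos. unfold Re, Im; cbn [fst snd].
  assert (Hsc : sin eta ^ 2 + cos eta ^ 2 = 1) by (rewrite <- !Rsqr_pow2; apply sin2_cos2).
  transitivity ((sin eta ^ 2 + cos eta ^ 2) / (4 * cos eta ^ 2)); [field; exact Hcos|].
  rewrite Hsc. field. exact Hcos.
Qed.

Theorem lemma3p3 (eta : R) (Heta : 0 < eta < PI / 3) :
  forall z : C, co (Vset eta) z ->
    co (Vset eta) (f1 eta z) /\ co (Vset eta) (f2 eta z).
Proof.
  assert (Hcos : 1/2 < cos eta).
  { rewrite <- cos_PI3. apply cos_decreasing_1; pose proof PI_RGT_0; lra. }
  apply (co_vertices_invariant (a_of eta) (Cmod (a_of eta) ^ 2)).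
  - rewrite a_of_components by lra. reflexivity.
  - reflexivity.
  - rewrite Cmod_a_of_sqr by lra. rewrite <- Rinv_1. apply Rinv_lt_contravar; nra.
Qed.
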